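(* Let $F$ and $H$ be two CNF formulae built over two disjoint sets of variables, and let $x$ be a variable occurring in neither of them. If both $F$ and $H$ are unsatisfiable, then $x$ is an optimal backtracking branching variable for $F +_x H = (F \vee x) \cup (H \vee \neg x)$, i.e., $x$ is the root of some minimum-size backtracking search tree of $F +_x H$.
   Context: A CNF formula is a finite set of clauses (disjunctions of literals); the empty clause is unsatisfiable. For a formula $F$ and a literal $l$, $l \vee F = F \vee l = \{ l \vee \gamma \mid \gamma \in F\}$. For a partial truth assignment $I$ (a set of literals), $F|I$ is the formula obtained by deleting every clause containing a literal true under $I$ and deleting from the remaining clauses every literal false under $I$. $Var(F)$ is the set of variables of $F$. A binary tree is either the empty tree $()$ or a triple $(x~T_1~T_2)$ with a node labelled $x$, left subtree $T_1$ and right subtree $T_2$; its size is its number of nodes. A backtracking search tree (BST) of $F$ is: the empty tree if $F$ contains the empty clause; otherwise a tree $(x~T_1~T_2)$ where $x \in Var(F)$, $T_1$ is a BST of $F|\{\neg x\}$ and $T_2$ is a BST of $F|\{x\}$. An optimal BST is a BST of minimum size. *)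

From mathcomp Require Import all_boot.
Set Implicit Arguments. Unset Strict Implicit. Unset Printing Implicit Defensive.

(* Variables are natural numbers; a literal is a pair (variable, polarity),
   polarity true = positive literal x, false = negative literal ~x. *)
Definition var := nat.
Definition lit := (nat * bool)%type.
Definition pos (x : var) : lit := (x, true).
Definition neg (x : var) : lit := (x, false).
Definition negl (l : lit) : lit := (l.1, ~~ l.2).

(* A clause is a finite set of literals, a CNF formula a finite set of
   clauses; both are represented by (finite) lists, read as sets. *)
Definition clause := seq lit.
Definition formula := seq clause.

Definition Var (F : formula) : seq var := flatten [seq [seq l.1 | l <- c] | c <- F].

Definition has_empty (F : formula) : bool := has (fun c : clause => nilp c) F.

Definition restrict (F : formula) (I : seq lit) : formula :=
  [seq [seq m <- c | negl m \notin I] | c <- F & ~~ has (fun m => m \in I) c].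

Definition or_lit (l : lit) (F : formula) : formula := [seq l :: c | c <- F].

Definition plus_x (F : formula) (x : var) (H : formula) : formula :=
  or_lit (pos x) F ++ or_lit (neg x) H.

Definition lit_true (a : var -> bool) (l : lit) : bool := a l.1 == l.2.
Definition satisfies (a : var -> bool) (F : formula) : bool :=
  all (fun c : clause => has (lit_true a) c) F.
Definition unsat (F : formula) : Prop := forall a : var -> bool, ~~ satisfies a F.

Inductive tree : Type :=
| Leaf : tree
| Node : var -> tree -> tree -> tree.

Fixpoint tsize (T : tree) : nat :=
  match T with Leaf => 0 | Node _ T1 T2 => (tsize T1 + tsize T2).+1 end.

Inductive is_bst : formula -> tree -> Prop :=
| bst_leaf F : has_empty F -> is_bst F Leaf
| bst_node F x T1 T2 :
    ~~ has_empty F -> x \in Var F ->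
    is_bst (restrict F [:: neg x]) T1 ->
    is_bst (restrict F [:: pos x]) T2 ->
    is_bst F (Node x T1 T2).

Definition optimal_bst (F : formula) (T : tree) : Prop :=
  is_bst F T /\ forall T', is_bst F T' -> tsize T <= tsize T'.

(* Every backtracking search tree T of F +_x H contains search trees of F and
   of H whose sizes add up to less than |T|.  By induction on T: branching on
   x yields F and H themselves; branching on a variable y of F (symmetrically,
   of H) leaves H \/ ~x untouched, so the two subtrees give trees for F|~y,
   F|y and (twice) for H, of which we keep the two F-trees below a y-node and
   only one H-tree.
   Replacing an optimal tree by the node x over the trees extracted from it
   thus gives an optimal tree rooted at x; optimal trees exist because an
   unsatisfiable formula has some search tree and sizes are well-founded. *)

From Stdlib Require Import Classical.
From Pilot Require Import Defs.
From mathcomp Require Import all_boot zify.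
Set Implicit Arguments. Unset Strict Implicit.

Lemma VarP F v :
  reflect (exists2 c, c \in F & v \in [seq l.1 | l <- c]) (v \in Var F).
Proof. exact: flatten_mapP. Qed.

Lemma Var_cat F G : Var (F ++ G) = Var F ++ Var G.
Proof. by rewrite /Var map_cat flatten_cat. Qed.

Lemma Var_or_lit l F v : v \in Var (or_lit l F) -> (v == l.1) || (v \in Var F).
Proof.
case/VarP=> _ /mapP[c cF ->]; rewrite inE => /orP[-> // | vc].
by apply/orP; right; apply/VarP; exists c.
Qed.

Lemma Var_plus_x F x H v :
  v \in Var (plus_x F x H) -> [|| v == x, v \in Var F | v \in Var H].
Proof.
rewrite /plus_x Var_cat mem_cat.
by case/orP=> /Var_or_lit /orP[-> | ->]; rewrite ?orbT.
Qed.

Lemma mem_Var_plus_x F x H : F != [::] -> x \in Var (plus_x F x H).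
Proof. by case: F => // c F _; rewrite /plus_x /Var /= inE eqxx. Qed.

Lemma has_empty_plus_x F x H : ~~ has_empty (plus_x F x H).
Proof.
rewrite /has_empty /plus_x /or_lit has_cat !has_map.
by apply/norP; split; apply/hasPn.
Qed.

Lemma same_var_lit (m l : lit) : m.1 = l.1 -> m = l \/ negl m = l.
Proof. by case: m l => [v b] [w b'] /= <-; case: b; case: b'; auto. Qed.

Lemma eq_negl l : (l == negl l) = false.
Proof. by case: l => v [] /=; rewrite xpair_eqE eqxx. Qed.

Lemma restrict_cat F G I : restrict (F ++ G) I = restrict F I ++ restrict G I.
Proof. by rewrite /restrict filter_cat map_cat. Qed.

Lemma restrict_or_lit_true l F I : l \in I -> restrict (or_lit l F) I = [::].
Proof. by move=> lI; elim: F => //= c F; rewrite /restrict /= lI. Qed.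

Lemma restrict_or_lit_false l F I :
  l \notin I -> negl l \in I -> restrict (or_lit l F) I = restrict F I.
Proof.
move=> lI nlI; elim: F => //= c F IH; move: IH; rewrite /restrict /= (negbTE lI) /=.
by case: ifP => _ /= ->; rewrite ?nlI.
Qed.

Lemma restrict_or_lit l F I :
  l \notin I -> negl l \notin I -> restrict (or_lit l F) I = or_lit l (restrict F I).
Proof.
move=> lI nlI; elim: F => //= c F IH; move: IH; rewrite /restrict /= (negbTE lI) /=.
by case: ifP => _ /= ->; rewrite ?nlI.
Qed.

Lemma mem_Var (F : formula) (c : clause) (m : lit) :
  c \in F -> m \in c -> m.1 \in Var F.
Proof. by move=> cF mc; apply/VarP; exists c; last exact: map_f. Qed.

Lemma Var_eq_nil F : Var F = [::] -> ~~ has_empty F -> F = [::].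
Proof. by case: F => [|[|m c] F]. Qed.

Lemma restrict_id F I : (forall l, l \in I -> l.1 \notin Var F) -> restrict F I = F.
Proof.
move=> IF; have notI c m : c \in F -> m \in c -> m \notin I.
  by move=> cF mc; apply: contraL (mem_Var cF mc); apply: IF.
rewrite /restrict (all_filterP _); last first.
  by apply/allP => c cF; apply/hasPn => m /(notI _ _ cF).
rewrite -[RHS]map_id; apply/eq_in_map => c cF; apply/all_filterP/allP => m mc.
by apply: contraL (mem_Var cF mc); apply: IF.
Qed.

Lemma Var_restrict_sub F I : {subset Var (restrict F I) <= Var F}.
Proof.
move=> v /VarP[d /mapP[c]]; rewrite mem_filter => /andP[_ cF] -> /mapP[m].
by rewrite mem_filter => /andP[_ mc] ->; exact: mem_Var cF mc.
Qed.

Lemma Var_restrict_notin F I l : l \in I -> l.1 \notin Var (restrict F I).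
Proof.
move=> lI; apply/VarP => -[d /mapP[c]]; rewrite mem_filter => /andP[/hasPn cI _] ->.
case/mapP=> m; rewrite mem_filter => /andP[nmI mc] /esym/same_var_lit[ml | nml].
  by move: (cI m mc); rewrite ml lI.
by move: nmI; rewrite nml lI.
Qed.

Lemma size_undup_Var_restrict F I l : l \in I -> l.1 \in Var F ->
  size (undup (Var (restrict F I))) < size (undup (Var F)).
Proof.
move=> lI lF; apply: (@uniq_leq_size _ (l.1 :: _)).
  by rewrite /= undup_uniq mem_undup Var_restrict_notin.
move=> v; rewrite inE !mem_undup => /orP[/eqP -> // |]; exact: Var_restrict_sub.
Qed.

Lemma eq_satisfies a b F : {in Var F, a =1 b} -> satisfies a F = satisfies b F.
Proof.
move=> eq_ab; apply: eq_in_all => c cF; apply: eq_in_has => m mc.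
by rewrite /lit_true eq_ab // (mem_Var cF mc).
Qed.

Lemma satisfies_restrict a F I :
  (forall l, l \in I -> lit_true a l) -> satisfies a (restrict F I) -> satisfies a F.
Proof.
move=> Ia /allP sat; apply/allP => c cF.
case: (boolP (has (mem I) c)) => [/hasP[m mc /Ia] | cI].
  by move=> am; apply/hasP; exists m.
have /sat/hasP[m] : [seq m <- c | negl m \notin I] \in restrict F I.
  by apply: map_f; rewrite mem_filter cI.
by rewrite mem_filter => /andP[_ mc] am; apply/hasP; exists m.
Qed.

Lemma unsat_restrict F l : unsat F -> unsat (restrict F [:: l]).
Proof.
move=> uF a; apply/negP => sat.
pose b v := if v == l.1 then l.2 else a v.
have /negP := uF b; apply; apply: (@satisfies_restrict _ _ [:: l]).
  by move=> m; rewrite inE => /eqP ->; rewrite /lit_true /b eqxx.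
rewrite -(eq_satisfies (a := a)) // => v vF; rewrite /b ifN //.
by apply: contraNneq (Var_restrict_notin F (mem_head l [::])) => <-.
Qed.

Lemma restrict_plus_x_neg F x H :
  x \notin Var F -> restrict (plus_x F x H) [:: neg x] = F.
Proof.
move=> xF; rewrite restrict_cat restrict_or_lit_false ?inE ?(eq_negl (pos x)) //.
rewrite restrict_or_lit_true ?mem_head // cats0 restrict_id //.
by move=> l /[1!inE] /eqP ->.
Qed.

Lemma restrict_plus_x_pos F x H :
  x \notin Var H -> restrict (plus_x F x H) [:: pos x] = H.
Proof.
move=> xH; rewrite restrict_cat restrict_or_lit_true ?mem_head //.
rewrite restrict_or_lit_false ?inE ?(eq_negl (neg x)) // restrict_id //.
by move=> l /[1!inE] /eqP ->.
Qed.

Lemma restrict_plus_x_l F x H l : l.1 != x -> l.1 \notin Var H ->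
  restrict (plus_x F x H) [:: l] = plus_x (restrict F [:: l]) x H.
Proof.
move=> lx lH; have notin b : (x, b) \notin [:: l].
  by rewrite inE; apply: contra lx => /eqP <-.
rewrite restrict_cat !restrict_or_lit ?notin // [restrict H _]restrict_id //.
by move=> k /[1!inE] /eqP ->.
Qed.

Lemma restrict_plus_x_r F x H l : l.1 != x -> l.1 \notin Var F ->
  restrict (plus_x F x H) [:: l] = plus_x F x (restrict H [:: l]).
Proof.
move=> lx lF; have notin b : (x, b) \notin [:: l].
  by rewrite inE; apply: contra lx => /eqP <-.
rewrite restrict_cat !restrict_or_lit ?notin // [restrict F _]restrict_id //.
by move=> k /[1!inE] /eqP ->.
Qed.

Lemma is_bst_Leaf F : is_bst F Leaf -> has_empty F.
Proof. by inversion 1. Qed.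

Lemma is_bst_Node F y T1 T2 : is_bst F (Node y T1 T2) ->
  [/\ y \in Var F, is_bst (restrict F [:: neg y]) T1
    & is_bst (restrict F [:: pos y]) T2].
Proof. by inversion 1. Qed.

Lemma is_bst_nonnil F T : is_bst F T -> F != [::].
Proof. by case=> [[] | [] ]. Qed.

Lemma bst_exists F : unsat F -> exists T, is_bst F T.
Proof.
have [n] := ubnP (size (undup (Var F))).
elim: n F => // n IH F; rewrite ltnS => szF uF.
have [eF | neF] := boolP (has_empty F); first by exists Leaf; apply: bst_leaf.
case VF: (Var F) => [|y vs]; first by have := uF predT; rewrite (Var_eq_nil VF neF).
have yF : y \in Var F by rewrite VF mem_head.
have branch l : l.1 = y -> exists T, is_bst (restrict F [:: l]) T.
  move=> ly; apply: IH (unsat_restrict _ uF); apply: leq_trans _ szF.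
  by apply: (size_undup_Var_restrict (mem_head l [::])); rewrite ly.
have [T1 b1] := branch (neg y) erefl; have [T2 b2] := branch (pos y) erefl.
by exists (Node y T1 T2); apply: bst_node.
Qed.

Lemma optimal_bst_exists F T : is_bst F T -> exists T', optimal_bst F T'.
Proof.
have [n] := ubnP (Defs.tsize T); elim: n T => // n IH T; rewrite ltnS => szT bT.
have [[T' [bT' ltT']] | noT'] :=
  classic (exists T', is_bst F T' /\ Defs.tsize T' < Defs.tsize T).
  by apply: (IH T') => //; apply: leq_trans ltT' szT.
exists T; split=> // T' bT'; rewrite leqNgt; apply/negP => ltT'.
by apply: noT'; exists T'.
Qed.

Lemma bst_of_subtrees F y T1 T2 : y \in Var F ->
  is_bst (restrict F [:: neg y]) T1 -> is_bst (restrict F [:: pos y]) T2 ->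
  exists T, is_bst F T /\ Defs.tsize T <= Defs.tsize (Node y T1 T2).
Proof.
move=> yF b1 b2; have [eF | neF] := boolP (has_empty F).
  by exists Leaf; split=> //; apply: bst_leaf.
by exists (Node y T1 T2); split=> //; apply: bst_node.
Qed.

Lemma bst_plus_x_node F x H TF TH : x \notin Var F -> x \notin Var H ->
  is_bst F TF -> is_bst H TH -> is_bst (plus_x F x H) (Node x TF TH).
Proof.
move=> xF xH bF bH; apply: bst_node; rewrite ?has_empty_plus_x //.
- exact/mem_Var_plus_x/(is_bst_nonnil bF).
- by rewrite restrict_plus_x_neg.
- by rewrite restrict_plus_x_pos.
Qed.

Lemma bst_plus_x_split F x H T :
  (forall v, v \in Var F -> v \notin Var H) -> x \notin Var F -> x \notin Var H ->
  is_bst (plus_x F x H) T ->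
  exists TF TH,
    [/\ is_bst F TF, is_bst H TH & Defs.tsize (Node x TF TH) <= Defs.tsize T].
Proof.
elim: T F H => [|y T1 IH1 T2 IH2] F H disj xF xH.
  by move/is_bst_Leaf; rewrite (negbTE (has_empty_plus_x _ _ _)).
case/is_bst_Node=> /Var_plus_x; have [-> _ | yx /= yFH] := eqVneq y x.
  by rewrite restrict_plus_x_neg // restrict_plus_x_pos // => b1 b2; exists T1, T2.
case/orP: yFH => [yF | yH].
  have yH := disj y yF; rewrite !restrict_plus_x_l // => b1 b2.
  have disj' l v : v \in Var (restrict F [:: l]) -> v \notin Var H.
    by move/Var_restrict_sub; apply: disj.
  have xF' l : x \notin Var (restrict F [:: l]).
    by apply: contra xF; apply: Var_restrict_sub.
  have [TF1 [TH1 [bF1 bH1 le1]]] := IH1 _ _ (disj' _) (xF' _) xH b1.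
  have [TF2 [TH2 [bF2 _ le2]]] := IH2 _ _ (disj' _) (xF' _) xH b2.
  have [TF [bF leF]] := bst_of_subtrees yF bF1 bF2.
  by exists TF, TH1; split=> //; move: le1 le2 leF => /=; lia.
have yF : y \notin Var F by apply: contraL yH; apply: disj.
rewrite !restrict_plus_x_r // => b1 b2.
have disj' l v : v \in Var F -> v \notin Var (restrict H [:: l]).
  by move/disj; apply: contra; apply: Var_restrict_sub.
have xH' l : x \notin Var (restrict H [:: l]).
  by apply: contra xH; apply: Var_restrict_sub.
have [TF1 [TH1 [bF1 bH1 le1]]] := IH1 _ _ (disj' _) xF (xH' _) b1.
have [TF2 [TH2 [_ bH2 le2]]] := IH2 _ _ (disj' _) xF (xH' _) b2.
have [TH [bH leH]] := bst_of_subtrees yH bH1 bH2.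
by exists TF1, TH; split=> //; move: le1 le2 leH => /=; lia.
Qed.

Theorem lemma4 (F H : formula) (x : var) :
  (forall v, v \in Var F -> v \notin Var H) ->
  x \notin Var F -> x \notin Var H ->
  unsat F -> unsat H ->
  exists T1 T2, optimal_bst (plus_x F x H) (Node x T1 T2).
Proof.
move=> disj xF xH uF uH.
have [TF0 bF0] := bst_exists uF; have [TH0 bH0] := bst_exists uH.
have [T [bT optT]] := optimal_bst_exists (bst_plus_x_node xF xH bF0 bH0).
have [TF [TH [bF bH le]]] := bst_plus_x_split disj xF xH bT.
exists TF, TH; split; first exact: bst_plus_x_node.
by move=> T' /optT; apply: leq_trans.
Qed.
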